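(* Let $k$ be a positive definite kernel on a set $\mathcal{X}$ and $k^\Delta$ the induced dueling kernel on $\mathcal{X}^2$. Let $\{(x_i,x'_i,y_i)\}_{i=1}^t$ be an observation set with $y_i\in\{0,1\}$, and let $h_t$ and $k^\Delta_t$ be the predictor and posterior covariance defined in the context. Let $\tilde h_t\sim\mathrm{GP}(h_t,v_t^2k^\Delta_t)$ be a Gaussian process sample on $\mathcal{X}^2$, where $v_t$ is a fixed (deterministic) sequence. Then there exists a function $\tilde f_t$ on $\mathcal{X}$ such that for all $(x,x')\in\mathcal{X}^2$, almost surely, $\tilde h_t(x,x')=\tilde f_t(x)-\tilde f_t(x')$.
   Context: The dueling kernel is $k^\Delta((x_1,x'_1),(x_2,x'_2))=k(x_1,x_2)+k(x'_1,x'_2)-k(x_1,x'_2)-k(x'_1,x_2)$, with RKHS $\mathcal{H}_{k^\Delta}$. With $\mu(u)=(1+e^{-u})^{-1}$ and $\lambda>0$, $h_t=\arg\min_{g\in\mathcal{H}_{k^\Delta}}\sum_{i=1}^t[-y_i\log\mu(g(x_i,x'_i))-(1-y_i)\log(1-\mu(g(x_i,x'_i)))]+\frac{\lambda}{2}\|g\|^2_{\mathcal{H}_{k^\Delta}}$. With $z_i=(x_i,x'_i)$, $k^\Delta_t(z)=[k^\Delta(z,z_j)]_{j=1}^t$, $K^\Delta_t=[k^\Delta(z_i,z_j)]_{i,j}$ and a constant $\kappa>0$, $k^\Delta_t(z,z')=k^\Delta(z,z')-k^\Delta_t(z)^\top(K^\Delta_t+\lambda\kappa I)^{-1}k^\Delta_t(z')$.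 *)

From HB Require Import structures.
From mathcomp Require Import all_boot all_order all_algebra.
From mathcomp Require Import all_classical all_reals all_analysis.
Set Implicit Arguments. Unset Strict Implicit. Unset Printing Implicit Defensive.
Import Order.TTheory GRing.Theory Num.Theory.
Import numFieldNormedType.Exports.
Local Open Scope classical_set_scope.
Local Open Scope ring_scope.

Section Defs.
Variable R : realType.

Definition pd_kernel (Z : Type) (K : Z -> Z -> R) : Prop :=
  (forall z w, K z w = K w z) /\
  (forall (n : nat) (a : 'I_n -> R) (z : 'I_n -> Z),
      0 <= \sum_(i < n) \sum_(j < n) a i * a j * K (z i) (z j)).

Definition dueling (X : Type) (k : X -> X -> R) (z1 z2 : X * X) : R :=
  k z1.1 z2.1 + k z1.2 z2.2 - k z1.1 z2.2 - k z1.2 z2.1.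

(** RKHS of a kernel K on Z, via the Moore--Aronszajn construction.
    Elements of the pre-Hilbert space: finite combinations sum_p p.1 K(., p.2). *)
Definition pre_eval (Z : Type) (K : Z -> Z -> R) (s : seq (R * Z)) (z : Z) : R :=
  \sum_(p <- s) p.1 * K p.2 z.
Definition pre_ip (Z : Type) (K : Z -> Z -> R) (s t : seq (R * Z)) : R :=
  \sum_(p <- s) \sum_(q <- t) p.1 * q.1 * K p.2 q.2.
Definition pre_sub (Z : Type) (s t : seq (R * Z)) : seq (R * Z) :=
  s ++ map (fun q => (- q.1, q.2)) t.
Definition pre_norm2 (Z : Type) (K : Z -> Z -> R) (s : seq (R * Z)) : R :=
  pre_ip K s s.

Definition rkhs_approx (Z : Type) (K : Z -> Z -> R) (u : nat -> seq (R * Z))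
    (g : Z -> R) : Prop :=
  (forall e : R, 0 < e -> exists N : nat, forall m n : nat, (N <= m)%N -> (N <= n)%N ->
      pre_norm2 K (pre_sub (u m) (u n)) < e) /\
  (forall z, (fun n => pre_eval K (u n) z) @ \oo --> g z).

Definition in_rkhs (Z : Type) (K : Z -> Z -> R) (g : Z -> R) : Prop :=
  exists u, rkhs_approx K u g.

Definition rkhs_norm2 (Z : Type) (K : Z -> Z -> R) (g : Z -> R) (r : R) : Prop :=
  exists u, rkhs_approx K u g /\ (fun n => pre_norm2 K (u n)) @ \oo --> r.

Definition mu (u : R) : R := (1 + expR (- u))^-1.

Definition reg_loss (X : Type) (k : X -> X -> R) (lam : R) (t : nat)
    (xs xs' : 'I_t -> X) (ys : 'I_t -> bool) (g : X * X -> R) (nrm2 : R) : R :=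
  \sum_(i < t) (- (ys i)%:R * ln (mu (g (xs i, xs' i)))
                - (1 - (ys i)%:R) * ln (1 - mu (g (xs i, xs' i))))
  + lam / 2 * nrm2.

Definition is_ht (X : Type) (k : X -> X -> R) (lam : R) (t : nat)
    (xs xs' : 'I_t -> X) (ys : 'I_t -> bool) (h : X * X -> R) : Prop :=
  in_rkhs (dueling k) h /\
  exists rh, rkhs_norm2 (dueling k) h rh /\
    forall g rg, in_rkhs (dueling k) g -> rkhs_norm2 (dueling k) g rg ->
      reg_loss k lam xs xs' ys h rh <= reg_loss k lam xs xs' ys g rg.

Definition post_cov (X : Type) (k : X -> X -> R) (lam kappa : R) (t : nat)
    (xs xs' : 'I_t -> X) (z z' : X * X) : R :=
  let kD := dueling k in
  let zs := fun i => (xs i, xs' i) in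
  let kt := fun w => \col_(j < t) kD w (zs j) in
  let Kt := \matrix_(i < t, j < t) kD (zs i) (zs j) in
  kD z z' - (((kt z)^T *m invmx (Kt + (lam * kappa)%:M) *m kt z') ord0 ord0).

Definition gauss_law (m s2 : R) : set R -> \bar R :=
  if s2 <= 0 then (\d_m : set R -> \bar R) else normal_prob m (Num.sqrt s2).

Definition is_GP (d : measure_display) (Omega : measurableType d)
    (P : probability Omega R) (Z : Type) (F : Omega -> Z -> R)
    (mean : Z -> R) (cov : Z -> Z -> R) : Prop :=
  (forall z, measurable_fun setT (fun w => F w z)) /\
  forall (n : nat) (a : 'I_n -> R) (z : 'I_n -> Z) (A : set R), measurable A ->
    P ((fun w => \sum_(i < n) a i * F w (z i)) @^-1` A) =
    gauss_law (\sum_(i < n) a i * mean (z i))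
              (\sum_(i < n) \sum_(j < n) a i * a j * cov (z i) (z j)) A.

End Defs.

From HB Require Import structures.
From mathcomp Require Import all_boot all_order all_algebra.
From mathcomp Require Import all_classical all_reals all_analysis.
From mathcomp Require Import ring.
Set Implicit Arguments. Unset Strict Implicit. Unset Printing Implicit Defensive.
Import Order.TTheory GRing.Theory Num.Theory.
Import numFieldNormedType.Exports.
Local Open Scope classical_set_scope.
Local Open Scope ring_scope.

(** Every [g] in the RKHS of the dueling kernel, and the posterior covariance
    in its second argument, satisfies [g (x, x') = g (x, x0) - g (x', x0)], i.e. is
    a difference [f x - f x'] with [f := g (., x0)].  For a Gaussian process
    with such mean and covariance, the combination
    [h~ (x, x') - h~ (x, x0) + h~ (x', x0)] has mean and variance zero, so it
    vanishes almost surely, and [f~ := h~ (., x0)] works. *)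

Section PairDifference.
Variables (R : realType) (X : Type).

Definition is_pair_difference (g : X * X -> R) : Prop :=
  forall x x' x0, g (x, x') = g (x, x0) - g (x', x0).

Lemma pair_differenceZ (a : R) (g : X * X -> R) :
  is_pair_difference g -> is_pair_difference (fun z => a * g z).
Proof. by move=> dg x x' x0; rewrite (dg x x' x0) mulrBr. Qed.

Lemma dueling_pair_difference_r (k : X -> X -> R) p :
  is_pair_difference (dueling k p).
Proof. by move=> x x' x0; rewrite /dueling /=; ring. Qed.

Lemma dueling_pair_difference_l (k : X -> X -> R) p :
  is_pair_difference (dueling k ^~ p).
Proof. by move=> x x' x0; rewrite /dueling /=; ring. Qed.

Lemma pre_eval_pair_difference (k : X -> X -> R) s :
  is_pair_difference (pre_eval (dueling k) s).
Proof.
move=> x x' x0; rewrite /pre_eval -sumrB; apply: eq_bigr => p _.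
by rewrite (dueling_pair_difference_r k p.2 x x' x0) mulrBr.
Qed.

Lemma pair_difference_cvg {u : nat -> X * X -> R} {g : X * X -> R} :
  (forall n, is_pair_difference (u n)) ->
  (forall z, (fun n => u n z) @ \oo --> g z) -> is_pair_difference g.
Proof.
move=> du ug x x' x0; apply/eqP; rewrite -subr_eq0; apply/eqP.
have u0 : (fun n => u n (x, x') - (u n (x, x0) - u n (x', x0))) = cst 0.
  by apply: funext => n; rewrite /= -du subrr.
have : (fun n => u n (x, x') - (u n (x, x0) - u n (x', x0))) @ \oo -->
    g (x, x') - (g (x, x0) - g (x', x0)).
  by apply: cvgB; [|apply: cvgB].
rewrite u0 => lim0; apply: (cvg_unique _ lim0 (cvg_cst 0)).
exact: norm_hausdorff.
Qed.

Lemma rkhs_dueling_pair_difference (k : X -> X -> R) g :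
  in_rkhs (dueling k) g -> is_pair_difference g.
Proof.
case=> u [_ ug].
exact: (pair_difference_cvg (fun n => pre_eval_pair_difference k (u n)) ug).
Qed.

Lemma post_cov_pair_difference (k : X -> X -> R) lam kappa t
    (xs xs' : 'I_t -> X) w :
  is_pair_difference (post_cov k lam kappa xs xs' w).
Proof.
move=> x x' x0; rewrite /post_cov /=; set B := (_ *m invmx _).
have -> : \col_(j < t) dueling k (x, x') (xs j, xs' j) =
    \col_(j < t) dueling k (x, x0) (xs j, xs' j)
    - \col_(j < t) dueling k (x', x0) (xs j, xs' j).
  apply/matrixP => i j; rewrite !mxE.
  exact: dueling_pair_difference_l.
by rewrite mulmxBr (dueling_pair_difference_r k w x x' x0) !mxE; ring.
Qed.

Section Triple.
Variables x x' x0 : X.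

Definition triple_coef (i : 'I_3) : R := nth 0 [:: 1; -1; 1] i.
Definition triple_pt (i : 'I_3) : X * X :=
  nth (x, x) [:: (x, x'); (x, x0); (x', x0)] i.

Lemma triple_sumE (g : X * X -> R) :
  \sum_(i < 3) triple_coef i * g (triple_pt i) =
  g (x, x') - (g (x, x0) - g (x', x0)).
Proof. by rewrite !big_ord_recr big_ord0 /triple_coef /triple_pt /=; ring. Qed.

Lemma triple_sum_eq0 (g : X * X -> R) :
  is_pair_difference g -> \sum_(i < 3) triple_coef i * g (triple_pt i) = 0.
Proof. by move=> dg; rewrite triple_sumE -dg subrr. Qed.

Lemma triple_quad_form_eq0 (c : X * X -> X * X -> R) :
  (forall z, is_pair_difference (c z)) ->
  \sum_(i < 3) \sum_(j < 3)
     triple_coef i * triple_coef j * c (triple_pt i) (triple_pt j) = 0.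
Proof.
move=> dc; apply: big1 => i _.
under eq_bigr do rewrite -mulrA.
by rewrite -mulr_sumr triple_sum_eq0 ?mulr0.
Qed.

End Triple.
End PairDifference.

Lemma GP_zero_variance_ae (R : realType) (d : measure_display)
    (Omega : measurableType d) (P : probability Omega R) (Z : Type)
    (F : Omega -> Z -> R) (m : Z -> R) (c : Z -> Z -> R)
    (n : nat) (a : 'I_n -> R) (z : 'I_n -> Z) :
  is_GP P F m c ->
  \sum_(i < n) \sum_(j < n) a i * a j * c (z i) (z j) = 0 ->
  {ae P, forall w, \sum_(i < n) a i * F w (z i) = \sum_(i < n) a i * m (z i)}.
Proof.
move=> [mF lawF] var0; set S := fun w => \sum_(i < n) a i * F w (z i).
have mS : measurable_fun setT S.
  apply: measurable_sum => i.
  exact: measurable_realfun.measurable_funM (measurable_cst _) (mF _).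
have mA : measurable (~` [set \sum_(i < n) a i * m (z i)]) by exact/measurableC.
exists (S @^-1` ~` [set \sum_(i < n) a i * m (z i)]); split => //.
- by rewrite -[X in measurable X]setTI; exact: mS.
- rewrite /S lawF // var0 /gauss_law lexx diracE memNset //.
  exact: (fun ne => ne erefl).
Qed.

Theorem proposition1 (R : realType) (X : Type) (k : X -> X -> R)
  (hk : pd_kernel k) (lam kappa : R) (hlam : 0 < lam) (hkappa : 0 < kappa)
  (t : nat) (xs xs' : 'I_t -> X) (ys : 'I_t -> bool)
  (h : X * X -> R) (hh : is_ht k lam xs xs' ys h)
  (v : R)
  (d : measure_display) (Omega : measurableType d) (P : probability Omega R)
  (htil : Omega -> X * X -> R)
  (hGP : is_GP P htil h (fun z z' => v ^+ 2 * post_cov k lam kappa xs xs' z z')) :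
  exists ftil : Omega -> X -> R,
    forall x x' : X, {ae P, forall w, htil w (x, x') = ftil w x - ftil w x'}.
Proof.
have [[x0 _]|noX] := pselect (exists x : X, True); last first.
  by exists (fun _ _ => 0) => x; exfalso; apply: noX; exists x.
exists (fun w y => htil w (y, x0)) => x x'.
have dh : is_pair_difference h := rkhs_dueling_pair_difference hh.1.
have var0 := triple_quad_form_eq0 x x' x0 (fun z =>
  pair_differenceZ (v ^+ 2) (post_cov_pair_difference k lam kappa xs xs' z)).
apply: filterS (GP_zero_variance_ae hGP var0) => w.
rewrite /= (triple_sum_eq0 _ _ _ dh) triple_sumE => /eqP.
by rewrite subr_eq0 => /eqP.
Qed.
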